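(* Let $\alpha>0$, $N\ge1$, $r\ge1$, and let $(\mathbf A^k_n)$ and $(\mathbf B^k_n)$, $k\in[r]$, $n\in[N]$, be tuples of matrices with $\mathbf A^k_n,\mathbf B^k_n\in\mathbb R^{m_n\times p_n}$ and $\|\mathbf A^k_n\|_F=\|\mathbf B^k_n\|_F=\alpha$ for all $k,n$. If $\sqrt{\sum_{k=1}^r\sum_{n=1}^N\|\mathbf A^k_n-\mathbf B^k_n\|_F^2}\le\epsilon$, then $$\Big\|\sum_{k=1}^r\mathbf A^k_1\otimes\cdots\otimes\mathbf A^k_N-\sum_{k=1}^r\mathbf B^k_1\otimes\cdots\otimes\mathbf B^k_N\Big\|_F\le\alpha^{N-1}\sqrt{Nr}\,\epsilon.$$
   Context: $\otimes$ is the Kronecker product and $\|\cdot\|_F$ the Frobenius norm. *)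

From mathcomp Require Import all_boot all_order all_algebra.
From mathcomp Require Import reals.
From mathcomp Require Export mxtens.
Set Implicit Arguments. Unset Strict Implicit. Unset Printing Implicit Defensive.
Import Order.TTheory GRing.Theory Num.Theory.
Local Open Scope ring_scope.

Definition frob (R : realType) (m p : nat) (A : 'M[R]_(m, p)) : R :=
  Num.sqrt (\sum_(i < m) \sum_(j < p) A i j ^+ 2).

Fixpoint prodd (d : nat -> nat) (N : nat) : nat :=
  match N with 0 => 1%N | N'.+1 => (prodd d N' * d N')%N end.

(* Iterated Kronecker product A 0 (x) A 1 (x) ... (x) A (N-1)
   (built left-associatively from the 1x1 identity, using mathcomp's
   row-major Kronecker product tensmx). *)
Fixpoint kron (R : realType) (m p : nat -> nat)
    (A : forall n : nat, 'M[R]_(m n, p n)) (N : nat)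
    : 'M[R]_(prodd m N, prodd p N) :=
  match N return 'M[R]_(prodd m N, prodd p N) with
  | 0 => 1%:M
  | N'.+1 => tensmx (kron A N') (A N')
  end.

From mathcomp Require Import all_boot all_order all_algebra.
From mathcomp Require Import reals.
From mathcomp Require Import ring lra.

Set Implicit Arguments.
Unset Strict Implicit.
Unset Printing Implicit Defensive.
Import Order.TTheory GRing.Theory Num.Theory.
Local Open Scope ring_scope.

(* Writing A^k_1 ⊗ ... ⊗ A^k_N - B^k_1 ⊗ ... ⊗ B^k_N as a telescoping sum of N
   Kronecker products, each with one factor A^k_n - B^k_n and N - 1 factors of
   Frobenius norm alpha, and using that the Frobenius norm is multiplicative on
   Kronecker products, gives a bound alpha^(N-1) sum_n ||A^k_n - B^k_n|| for each k.
   Summing over k and applying Cauchy-Schwarz to the Nr numbers ||A^k_n - B^k_n||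
   yields the factor sqrt(Nr). *)

Lemma sum_CauchySchwarz (R : realDomainType) (I : finType) (x y : I -> R) :
  (\sum_i x i * y i) ^+ 2 <= (\sum_i x i ^+ 2) * (\sum_i y i ^+ 2).
Proof.
set sx := \sum_i x i ^+ 2; set sy := \sum_i y i ^+ 2; set d := \sum_i x i * y i.
have lagrange : \sum_a \sum_b (x a * y b - x b * y a) ^+ 2 = 2 * (sx * sy - d ^+ 2).
  transitivity (\sum_a (x a ^+ 2 * sy + y a ^+ 2 * sx - 2 * (x a * y a) * d)).
    apply: eq_bigr => a _; rewrite /sx /sy /d !mulr_sumr -big_split -sumrB /=.
    by apply: eq_bigr => b _; ring.
  rewrite sumrB big_split /= -!mulr_suml -mulr_sumr -/sx -/sy -/d; ring.
have : 0 <= \sum_a \sum_b (x a * y b - x b * y a) ^+ 2.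
  by apply: sumr_ge0 => a _; apply: sumr_ge0 => b _; apply: sqr_ge0.
rewrite lagrange; lra.
Qed.

Section SumInequalities.

Variable R : rcfType.
Implicit Types (I : finType).

Lemma sum_CauchySchwarz_sqrt I (x y : I -> R) :
  \sum_i x i * y i <= Num.sqrt (\sum_i x i ^+ 2) * Num.sqrt (\sum_i y i ^+ 2).
Proof.
have sq_ge0 (z : I -> R) : 0 <= \sum_i z i ^+ 2.
  by apply: sumr_ge0 => i _; apply: sqr_ge0.
apply: le_trans (ler_norm _) _.
by rewrite -sqrtr_sqr -sqrtrM ?sq_ge0 // ler_sqrt ?mulr_ge0 ?sum_CauchySchwarz.
Qed.

Lemma sum_le_sqrt_card I (x : I -> R) :
  \sum_i x i <= Num.sqrt #|I|%:R * Num.sqrt (\sum_i x i ^+ 2).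
Proof.
have := sum_CauchySchwarz_sqrt x (fun=> 1).
under eq_bigr do rewrite mulr1.
under [\sum_i 1 ^+ 2]eq_bigr do rewrite expr1n.
by rewrite sumr_const mulrC.
Qed.

Lemma sqrt_sum_sqrD I (x y : I -> R) :
  Num.sqrt (\sum_i (x i + y i) ^+ 2)
    <= Num.sqrt (\sum_i x i ^+ 2) + Num.sqrt (\sum_i y i ^+ 2).
Proof.
set sx := \sum_i x i ^+ 2; set sy := \sum_i y i ^+ 2.
have [sx_ge0 sy_ge0] : 0 <= sx /\ 0 <= sy.
  by split; apply: sumr_ge0 => i _; apply: sqr_ge0.
rewrite -[X in _ <= X]ger0_norm ?addr_ge0 ?sqrtr_ge0 // -sqrtr_sqr.
rewrite ler_sqrt ?sqr_ge0 // sqrrD !sqr_sqrtr //.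
have -> : \sum_i (x i + y i) ^+ 2 = sx + sy + 2 * \sum_i x i * y i.
  by rewrite mulr_sumr -!big_split; apply: eq_bigr => i _ /=; ring.
have := sum_CauchySchwarz_sqrt x y; rewrite -/sx -/sy; lra.
Qed.

End SumInequalities.

Section Frobenius.

Variable R : realType.

Lemma frob_pair m p (A : 'M[R]_(m, p)) :
  frob A = Num.sqrt (\sum_(ij : 'I_m * 'I_p) A ij.1 ij.2 ^+ 2).
Proof. by rewrite /frob pair_bigA. Qed.

Lemma frobD m p (A B : 'M[R]_(m, p)) : frob (A + B) <= frob A + frob B.
Proof.
rewrite !frob_pair (eq_bigr (fun ij => (A ij.1 ij.2 + B ij.1 ij.2) ^+ 2)).
  exact: sqrt_sum_sqrD.
by move=> ij _; rewrite mxE.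
Qed.

Lemma frob0 m p : frob (0 : 'M[R]_(m, p)) = 0.
Proof.
by rewrite /frob big1 ?sqrtr0 // => i _; rewrite big1 // => j _; rewrite mxE expr0n.
Qed.

Lemma frob_sum_le (I : finType) m p (F : I -> 'M[R]_(m, p)) :
  frob (\sum_i F i) <= \sum_i frob (F i).
Proof.
apply: (big_ind2 (fun (M : 'M_(m, p)) b => frob M <= b)) => [|A a B b leAa leBb|//].
  by rewrite frob0.
by apply: le_trans (frobD A B) _; apply: lerD.
Qed.

Lemma frob1 : frob (1%:M : 'M[R]_1) = 1.
Proof. by rewrite /frob !big_ord1 mxE expr1n sqrtr1. Qed.

Lemma frob_tensmx m n p q (A : 'M[R]_(m, n)) (B : 'M[R]_(p, q)) :
  frob (A *t B) = frob A * frob B.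
Proof.
rewrite /frob -sqrtrM; last first.
  by apply: sumr_ge0 => i _; apply: sumr_ge0 => j _; apply: sqr_ge0.
congr Num.sqrt; rewrite mulr_sum; apply: eq_bigr => i _.
by rewrite mulr_sum; apply: eq_bigr => j _; rewrite mxE exprMn.
Qed.

End Frobenius.

Section Kronecker.

Variables (R : realType) (m p : nat -> nat).
Implicit Types A B : forall n : nat, 'M[R]_(m n, p n).

Lemma frob_kron A N : frob (kron A N) = \prod_(n < N) frob (A n).
Proof.
elim: N => [|N IH] /=; first by rewrite big_ord0 frob1.
by rewrite frob_tensmx IH big_ord_recr.
Qed.

Lemma kronSB A B N :
  kron A N.+1 - kron B N.+1
    = (kron A N - kron B N) *t A N + kron B N *t (A N - B N).
Proof. by apply/matrixP => i j; rewrite !mxE; ring. Qed.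

Lemma frob_kronB A B (alpha : R) N :
  (forall n, (n <= N)%N -> frob (A n) <= alpha /\ frob (B n) <= alpha) ->
  frob (kron A N.+1 - kron B N.+1)
    <= alpha ^+ N * \sum_(n < N.+1) frob (A n - B n).
Proof.
elim: N => [|N IH] hAB.
  by rewrite kronSB /= subrr tens0mx add0r frob_tensmx frob1 mul1r expr0 mul1r big_ord1.
have [hA _] := hAB _ (leqnn N.+1).
have alpha_ge0 : 0 <= alpha by apply: le_trans (sqrtr_ge0 _) hA.
rewrite kronSB; apply: le_trans (frobD _ _) _.
rewrite (frob_tensmx (_ - _)) (frob_tensmx (kron B N.+1)) frob_kron.
rewrite [X in _ <= _ * X]big_ord_recr mulrDr.
apply: lerD.
- rewrite exprSr mulrAC; apply: ler_pM; rewrite ?sqrtr_ge0 //.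
  by apply: IH => n /leqW; apply: hAB.
- apply: ler_wpM2r; first exact: sqrtr_ge0.
  rewrite -[X in _ <= _ ^+ X](card_ord N.+1) -prodr_const.
  apply: ler_prod => n _; rewrite sqrtr_ge0 /=.
  by have [_ ->] := hAB n (ltnW (ltn_ord n)).
Qed.

End Kronecker.

Theorem lemma8 (R : realType) (N r : nat) (m p : nat -> nat)
    (A B : 'I_r -> forall n : nat, 'M[R]_(m n, p n)) (alpha eps : R) :
  0 < alpha -> (1 <= N)%N -> (1 <= r)%N ->
  (forall (k : 'I_r) (n : 'I_N), frob (A k n) = alpha /\ frob (B k n) = alpha) ->
  Num.sqrt (\sum_(k < r) \sum_(n < N) frob (A k n - B k n) ^+ 2) <= eps ->
  frob (\sum_(k < r) kron (A k) N - \sum_(k < r) kron (B k) N)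
    <= alpha ^+ (N - 1) * Num.sqrt (N * r)%:R * eps.
Proof.
case: N => [//|N] alpha_gt0 _ _ hAB heps.
have hkron k : frob (kron (A k) N.+1 - kron (B k) N.+1)
    <= alpha ^+ N * \sum_(n < N.+1) frob (A k n - B k n).
  by apply: frob_kronB => n hn; have [-> ->] := hAB k (Ordinal (hn : (n < N.+1)%N)).
rewrite -sumrB subn1 -mulrA; apply: le_trans (frob_sum_le _) _.
apply: le_trans (ler_sum _ (fun k _ => hkron k)) _.
rewrite -mulr_sumr ler_pM2l ?exprn_gt0 //.
have := sum_le_sqrt_card (fun kn : 'I_r * 'I_N.+1 => frob (A kn.1 kn.2 - B kn.1 kn.2)).
rewrite -(pair_bigA _ (fun k (n : 'I_N.+1) => frob (A k n - B k n) ^+ 2))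
  -(pair_bigA _ (fun k (n : 'I_N.+1) => frob (A k n - B k n))).
rewrite card_prod !card_ord mulnC => hsum; apply: le_trans hsum _.
by rewrite ler_wpM2l ?sqrtr_ge0.
Qed.
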